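(* Let $A$ be an $n\times n\times n$ ASHM and $P$ an $n\times n\times n$ permutation hypermatrix. Then $L(A)\preceq_l L(P)$; that is, every row and every column of $L(A)$ is majorized by $z_n=(n,n-1,\ldots,1)$.
   Context: An $n\times n$ alternating sign matrix (ASM) is an $n\times n$ matrix with entries in $\{0,1,-1\}$ such that in every row and column the nonzeros alternate in sign, beginning and ending with $+1$. An $n\times n\times n$ hypermatrix $A=[a_{ijk}]$ is written $A=[A_1,\ldots,A_n]$ with $A_k=[a_{ijk}]_{i,j}$; lines are obtained by fixing two of the three indices. $A$ is an ASHM if all entries lie in $\{0,\pm1\}$ and in every line the nonzeros alternate in sign beginning and ending with $+1$. A permutation hypermatrix is a $(0,1)$-hypermatrix with exactly one $1$ in each line. For an ASHM, $L(A)=1A_1+2A_2+\cdots+nA_n$. For $x,y\in\mathbb R^n$, $x$ is majorized by $y$ ($x\preceq y$) if $\sum_{j=1}^k x_{[j]}\le\sum_{j=1}^k y_{[j]}$ for all $k\le n$ with equality for $k=n$, where $x_{[j]}$ is the $j$-th largest component of $x$. For matrices $X,Y$ of equal size, $X\preceq_l Y$ means every row (column) of $X$ is majorized by the corresponding row (column) of $Y$. *)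

From HB Require Import structures.
From mathcomp Require Import all_boot all_order all_algebra.
Set Implicit Arguments. Unset Strict Implicit. Unset Printing Implicit Defensive.
Import Order.TTheory GRing.Theory Num.Theory.
Local Open Scope ring_scope.

(* An n x n x n hypermatrix A = [a_ijk] with integer entries: A i j k = a_{ijk}
   (indices 0-based: i,j,k : 'I_n stand for 1..n). *)
Definition hypermatrix (n : nat) := 'I_n -> 'I_n -> 'I_n -> int.

Definition line3 n (A : hypermatrix n) (i j : 'I_n) : seq int :=
  [seq A i j k | k <- enum 'I_n].
Definition line2 n (A : hypermatrix n) (i k : 'I_n) : seq int :=
  [seq A i j k | j <- enum 'I_n].
Definition line1 n (A : hypermatrix n) (j k : 'I_n) : seq int :=
  [seq A i j k | i <- enum 'I_n].

Definition all_lines n (A : hypermatrix n) (P : seq int -> bool) : bool :=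
  [forall i : 'I_n, forall j : 'I_n,
     [&& P (line3 A i j), P (line2 A i j) & P (line1 A i j)]].

(* A sequence whose entries are in {0,1,-1} and whose nonzero entries
   alternate in sign, beginning and ending with +1. *)
Definition alt_sign (s : seq int) : bool :=
  let t := [seq x <- s | x != 0] in
  [&& all (fun x : int => (x == 0) || (x == 1) || (x == -1)) s,
      t == [seq (if odd m then -1 else 1) | m <- iota 0 (size t)]
    & odd (size t)].

Definition is_ASHM n (A : hypermatrix n) : bool := all_lines A alt_sign.

Definition one_one (s : seq int) : bool :=
  all (fun x : int => (x == 0) || (x == 1)) s && (count (fun x : int => x == 1) s == 1)%N.

Definition is_perm_hypermatrix n (A : hypermatrix n) : bool := all_lines A one_one.

(* L(A) = 1 A_1 + 2 A_2 + ... + n A_n,  with A_k = [a_ijk]_{i,j} *)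
Definition Lmx n (A : hypermatrix n) : 'M[int]_n :=
  \matrix_(i, j) \sum_(k < n) (k.+1)%:Z * A i j k.

Definition sort_desc n (x : 'rV[int]_n) : seq int :=
  sort (fun a b => b <= a) [seq x 0 j | j <- enum 'I_n].

Definition majorized n (x y : 'rV[int]_n) : Prop :=
  (forall k : nat, (k <= n)%N ->
     \sum_(j < k) nth 0 (sort_desc x) j <= \sum_(j < k) nth 0 (sort_desc y) j)
  /\ \sum_(j < n) nth 0 (sort_desc x) j = \sum_(j < n) nth 0 (sort_desc y) j.

Definition majorized_l n (X Y : 'M[int]_n) : Prop :=
  (forall i : 'I_n, majorized (row i X) (row i Y)) /\
  (forall j : 'I_n, majorized (col j X)^T (col j Y)^T).

Definition z_vec n : 'rV[int]_n := \row_(j < n) (n - j)%:Z.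

(* Summation by parts writes the j-th entry of a row (or column) of L(A) as
   sum_t r_jt, where r_jt = sum_(k >= t) a_jk is a tail sum of an alternating
   line, hence 0 or 1.  Every line in the other direction sums to 1, so the
   t-th column of r sums to n - t.  Therefore any k entries add up to at most
   sum_t min(k, n - t) = n + (n - 1) + ... + (n - k + 1), with equality for
   k = n.  For a permutation hypermatrix every row and column of L(P) is a
   rearrangement of (1, ..., n), so it sorts to z_n. *)

From mathcomp Require Import all_boot all_order all_algebra zify.
Import Order.TTheory GRing.Theory Num.Theory.
Set Implicit Arguments. Unset Strict Implicit. Unset Printing Implicit Defensive.
Local Open Scope ring_scope.

Lemma sum_alternating_signs d c :
  \sum_(m <- iota d c) (if odd m then -1 else 1 : int) =
  if odd c then (if odd d then -1 else 1) else 0.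
Proof.
elim: c d => [|c IHc] d; first by rewrite big_nil.
by rewrite /= big_cons IHc /=; case: (odd c); case: (odd d); rewrite ?addr0 ?subrr ?addNr.
Qed.

Lemma big_filter_neq0 (V : nmodType) (s : seq V) :
  \sum_(x <- [seq x <- s | x != 0]) x = \sum_(x <- s) x.
Proof. by rewrite big_filter big_mkcond; apply: eq_bigr => x _; case: eqP => [->|]. Qed.

Lemma filter_drop_count (T : Type) (p : pred T) (s : seq T) t :
  filter p (drop t s) = drop (count p (take t s)) (filter p s).
Proof. by rewrite -{3}(cat_take_drop t s) filter_cat -size_filter drop_size_cat. Qed.

Lemma alt_sign_sum (s : seq int) : alt_sign s -> \sum_(x <- s) x = 1.
Proof.
case/and3P=> _ /eqP def_t odd_t.
by rewrite -big_filter_neq0 def_t big_map sum_alternating_signs odd_t.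
Qed.

(* The nonzero entries of a tail form an alternating run ending with the final +1. *)
Lemma alt_sign_drop_sum (s : seq int) t :
  alt_sign s -> 0 <= \sum_(x <- drop t s) x <= 1.
Proof.
case/and3P=> _ /eqP def_t odd_t.
rewrite -big_filter_neq0 filter_drop_count def_t -map_drop drop_iota big_map.
rewrite sum_alternating_signs add0n.
set d := count _ _; set L := size _ in odd_t *.
have [le_dL | /ltnW/eqnP-> //] := leqP d L.
by rewrite oddB // odd_t; case: (odd d).
Qed.

Lemma filter_iota_geq m t : [seq i <- iota 0 m | (t <= i)%N] = iota t (m - t).
Proof.
elim: m => [|m IHm]; first by [].
rewrite -addn1 iotaD filter_cat IHm add0n /=.
case: leqP => [le_tm | lt_mt].
  by rewrite -addnBAC // iotaD subnKC.
by rewrite cats0 addn1 (eqnP (ltnW lt_mt)) (eqnP lt_mt).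
Qed.

Lemma drop_enum_ord n t : drop t (enum 'I_n) = [seq k : 'I_n <- enum 'I_n | (t <= k)%N].
Proof.
apply: (inj_map val_inj).
by rewrite map_drop -(filter_map val (leq t)) val_enum_ord drop_iota filter_iota_geq.
Qed.

Lemma sum_drop_map_enum_ord (V : nmodType) n (g : 'I_n -> V) t :
  \sum_(x <- drop t [seq g k | k <- enum 'I_n]) x = \sum_(k < n | (t <= k)%N) g k.
Proof. by rewrite -map_drop drop_enum_ord big_map big_filter big_enum_cond. Qed.

Lemma sum_ord_geq_const (V : nmodType) n t (x : V) :
  \sum_(k < n | (t <= k)%N) x = x *+ (n - t).
Proof. by rewrite -sumr_const_nat big_geq_mkord. Qed.

Lemma sum_weighted_tails n (g : 'I_n -> int) :
  \sum_(k < n) k.+1%:Z * g k = \sum_(t < n) \sum_(k < n | (t <= k)%N) g k.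
Proof.
rewrite (exchange_big_dep xpredT) //=; apply: eq_bigr => k _.
rewrite (big_ord_narrow (ltn_ord k)) sumr_const card_ord.
by rewrite -natz mulr_natl.
Qed.

Lemma sum_minn_sub n k : (k <= n)%N ->
  (\sum_(t < n) minn k (n - t) = \sum_(j < k) (n - j))%N.
Proof.
elim: n k => [|n IHn] k le_kn.
  by move: le_kn; rewrite leqn0 => /eqP->; rewrite !big_ord0.
rewrite big_ord_recl subn0.
under eq_bigr => t _ do rewrite /= subSS.
have [le_kn' | lt_nk] := leqP k n.
  rewrite IHn // (minn_idPl (leqW le_kn')) addnC.
  rewrite [RHS](eq_bigr (fun j : 'I_k => n - j + 1)%N) => [|j _]; last first.
    by have := ltn_ord j; lia.
  by rewrite big_split sum_nat_const card_ord muln1.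
have -> : k = n.+1 by apply/eqP; rewrite eqn_leq le_kn.
rewrite minnn big_ord_recl subn0; congr (_ + _)%N.
rewrite -IHn //; apply: eq_bigr => t _; have := ltn_ord t; lia.
Qed.

Lemma sum_take_nth (V : nmodType) (s : seq V) k : (k <= size s)%N ->
  \sum_(j < k) s`_j = \sum_(x <- take k s) x.
Proof.
move=> le_ks; rewrite (big_nth 0) size_takel // big_mkord.
by apply: eq_bigr => j _; rewrite nth_take.
Qed.

Lemma sum_prefix_sort_desc_z_vec n k : (k <= n)%N ->
  \sum_(j < k) nth 0 (sort_desc (z_vec n)) j = \sum_(j < k) (n - j)%:Z.
Proof.
have ->: sort_desc (z_vec n) = [seq (n - m)%:Z | m <- iota 0 n].
  rewrite /sort_desc.
  have ->: [seq z_vec n 0 j | j <- enum 'I_n] = [seq (n - m)%:Z | m <- iota 0 n].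
    by rewrite -val_enum_ord -map_comp; apply: eq_map => j; rewrite mxE.
  apply: sorted_sort; first by move=> a b c le_ba le_cb; apply: le_trans le_cb le_ba.
  rewrite sorted_map; apply: sub_sorted (iota_ltn_sorted 0 n) => a b lt_ab /=.
  by rewrite lez_nat; lia.
move=> le_kn; apply: eq_bigr => j _.
by rewrite (nth_map 0%N) ?nth_iota ?size_iota // (leq_trans (ltn_ord j)).
Qed.

Definition desc_order n (x : 'rV[int]_n) : seq 'I_n :=
  sort (relpre (x 0) (fun a b : int => b <= a)) (enum 'I_n).

Lemma perm_desc_order n (x : 'rV[int]_n) : perm_eq (desc_order x) (enum 'I_n).
Proof. by rewrite perm_sort. Qed.

Lemma sum_prefix_sort_desc n (x : 'rV[int]_n) k : (k <= n)%N ->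
  \sum_(j < k) nth 0 (sort_desc x) j = \sum_(j <- take k (desc_order x)) x 0 j.
Proof.
move=> le_kn; have -> : sort_desc x = [seq x 0 j | j <- desc_order x].
  by rewrite /sort_desc sort_map.
rewrite sum_take_nth ?size_map ?(perm_size (perm_desc_order x)) ?size_enum_ord //.
by rewrite -map_take big_map.
Qed.

Lemma sum01_uniq_le (I : finType) (r : I -> int) (s : seq I) :
  (forall j, 0 <= r j <= 1) -> uniq s ->
  \sum_(j <- s) r j <= (size s)%:Z /\ \sum_(j <- s) r j <= \sum_j r j.
Proof.
move=> r01 uniq_s; split.
  by rewrite -sum1_size -natz natr_sum; apply: ler_sum => j _; case/andP: (r01 j).
rewrite big_uniq // [X in _ <= X](bigID (mem s)) /= lerDl.
by apply: sumr_ge0 => j _; case/andP: (r01 j).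
Qed.

Lemma majorized_z_vec_of_01_decomposition n (x : 'rV[int]_n)
    (r : 'I_n -> 'I_n -> int) :
  (forall j, x 0 j = \sum_t r j t) ->
  (forall j t, 0 <= r j t <= 1) ->
  (forall t : 'I_n, \sum_j r j t = (n - t)%:Z) ->
  majorized x (z_vec n).
Proof.
move=> def_x r01 col_r.
have prefix k : (k <= n)%N -> \sum_(j < k) nth 0 (sort_desc x) j =
    \sum_t \sum_(j <- take k (desc_order x)) r j t.
  move=> le_kn; rewrite sum_prefix_sort_desc //.
  by under eq_bigr => j _ do rewrite def_x; rewrite exchange_big.
split=> [k le_kn|]; rewrite prefix // sum_prefix_sort_desc_z_vec //.
  have uniq_take : uniq (take k (desc_order x)).
    by rewrite take_uniq // (perm_uniq (perm_desc_order x)) enum_uniq.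
  have size_take : size (take k (desc_order x)) = k.
    by rewrite size_takel // (perm_size (perm_desc_order x)) size_enum_ord.
  have sumz := big_morph Posz PoszD (erefl (Posz 0)).
  rewrite -sumz -sum_minn_sub // sumz.
  apply: ler_sum => t _.
  have [le_k le_col] := sum01_uniq_le (r01^~ t) uniq_take.
  rewrite size_take col_r in le_k le_col.
  by rewrite /minn; case: ltnP.
rewrite take_oversize ?(perm_size (perm_desc_order x)) ?size_enum_ord //.
by under eq_bigr => t _ do rewrite (perm_big _ (perm_desc_order x)) big_enum col_r.
Qed.

Lemma majorized_z_vec_of_alt_sign n (x : 'rV[int]_n) (a : 'I_n -> 'I_n -> int) :
  (forall j, x 0 j = \sum_(k < n) k.+1%:Z * a j k) ->
  (forall j, alt_sign [seq a j k | k <- enum 'I_n]) ->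
  (forall k, alt_sign [seq a j k | j <- enum 'I_n]) ->
  majorized x (z_vec n).
Proof.
move=> def_x alt_rows alt_cols.
apply: (majorized_z_vec_of_01_decomposition
          (r := fun j t => \sum_(k < n | (t <= k)%N) a j k)).
- by move=> j; rewrite def_x sum_weighted_tails.
- by move=> j t; rewrite -sum_drop_map_enum_ord alt_sign_drop_sum.
- have col_sum k : \sum_j a j k = 1.
    by rewrite -(alt_sign_sum (alt_cols k)) big_map big_enum.
  move=> t; rewrite (exchange_big_dep (fun k : 'I_n => (t <= k)%N)) //=.
  under eq_bigr => k le_tk do rewrite le_tk col_sum.
  by rewrite sum_ord_geq_const natz.
Qed.

Lemma one_one_map_enum_ord n (g : 'I_n -> int) :
  one_one [seq g k | k <- enum 'I_n] -> exists k0, forall k, g k = (k == k0)%:R.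
Proof.
case/andP=> /allP g01 /eqP count1.
have [k0 _ /eqP gk0] : exists2 k0, k0 \in enum 'I_n & g k0 == 1.
  by apply/hasP; rewrite has_count -count1 count_map.
exists k0 => k; have [->|ne_kk0] := eqVneq k k0; first by rewrite gk0.
have /orP[/eqP-> // | /eqP gk1] : (g k == 0) || (g k == 1).
  by apply/g01/map_f; rewrite mem_enum.
have: (size [:: k; k0] <= count (preim g (eq_op^~ 1)) (enum 'I_n))%N.
  rewrite -size_filter; apply: uniq_leq_size => [|i]; first by rewrite /= inE ne_kk0.
  by rewrite !inE mem_filter mem_enum /= andbT => /orP[]/eqP->; rewrite ?gk1 ?gk0.
by rewrite -count_map count1.
Qed.

Lemma sort_desc_perm n (x y : 'rV[int]_n) :
  perm_eq [seq x 0 j | j <- enum 'I_n] [seq y 0 j | j <- enum 'I_n] ->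
  sort_desc x = sort_desc y.
Proof.
apply/perm_sortP; first by move=> a b; exact: le_total.
  by move=> b a c le_ba le_cb; exact: le_trans le_cb le_ba.
by move=> a b le_ab; apply: le_anti; rewrite andbC.
Qed.

Lemma perm_map_enum_inj (T : finType) (f : T -> T) :
  injective f -> perm_eq [seq f i | i <- enum T] (enum T).
Proof.
move=> inj_f.
have uniq_f : uniq [seq f i | i <- enum T] by rewrite map_inj_uniq ?enum_uniq.
apply: uniq_perm; rewrite ?enum_uniq //.
have sub_f : {subset [seq f i | i <- enum T] <= enum T} by move=> i; rewrite mem_enum.
by have [|_ ?] := uniq_min_size uniq_f sub_f; rewrite ?size_map.
Qed.

Lemma sort_desc_of_perm_slice n (y : 'rV[int]_n) (p : 'I_n -> 'I_n -> int) :
  (forall j, y 0 j = \sum_(k < n) k.+1%:Z * p j k) ->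
  (forall j, one_one [seq p j k | k <- enum 'I_n]) ->
  (forall k, one_one [seq p j k | j <- enum 'I_n]) ->
  sort_desc y = sort_desc (z_vec n).
Proof.
move=> def_y one_rows one_cols.
have /fin_all_exists[sigma def_p] : forall j, exists k0, forall k, p j k = (k == k0)%:R.
  by move=> j; apply: one_one_map_enum_ord.
have y_sigma j : y 0 j = (sigma j).+1%:Z.
  rewrite def_y (bigD1 (sigma j)) //= big1 => [|k /negbTE ne_k].
    by rewrite def_p eqxx mulr1 addr0.
  by rewrite def_p ne_k mulr0.
have sigma_inj : injective sigma.
  move=> j1 j2 eq_sigma.
  have [j0 def_col] := one_one_map_enum_ord (one_cols (sigma j1)).
  have := def_col j2; have := def_col j1; rewrite !def_p eq_sigma eqxx.
  by case: eqP => [->|]; case: eqP.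
apply: sort_desc_perm.
have -> : [seq y 0 j | j <- enum 'I_n] =
          [seq k.+1%:Z | k : 'I_n <- [seq sigma j | j <- enum 'I_n]].
  by rewrite -[RHS]map_comp; apply: eq_map => j; rewrite /= y_sigma.
have -> : [seq z_vec n 0 j | j <- enum 'I_n] =
          [seq k.+1%:Z | k : 'I_n <- [seq rev_ord j | j <- enum 'I_n]].
  by rewrite -[RHS]map_comp; apply: eq_map => j; rewrite /= mxE subnSK.
apply/perm_map/(perm_trans (perm_map_enum_inj sigma_inj)).
by rewrite perm_sym perm_map_enum_inj //; exact: rev_ord_inj.
Qed.

Lemma all_linesP n (A : hypermatrix n) (P : pred (seq int)) :
  reflect (forall i j, [/\ P (line3 A i j), P (line2 A i j) & P (line1 A i j)])
          (all_lines A P).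
Proof.
apply: (iffP forallP) => [lines i j | lines i].
  by have /forallP/(_ j)/and3P := lines i.
by apply/forallP => j; have [? ? ?] := lines i j; apply/and3P.
Qed.

Theorem mainTheorem5 (n : nat) (A P : hypermatrix n) :
  is_ASHM A -> is_perm_hypermatrix P ->
  majorized_l (Lmx A) (Lmx P) /\
  (forall i : 'I_n, majorized (row i (Lmx A)) (z_vec n)) /\
  (forall j : 'I_n, majorized (col j (Lmx A))^T (z_vec n)).
Proof.
move=> /all_linesP alt_A /all_linesP one_P.
have rows_A i : majorized (row i (Lmx A)) (z_vec n).
  apply: (majorized_z_vec_of_alt_sign (a := A i)) => [j|j|k].
  - by rewrite !mxE.
  - by have [] := alt_A i j.
  - by have [] := alt_A i k.
have cols_A j : majorized (col j (Lmx A))^T (z_vec n).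
  apply: (majorized_z_vec_of_alt_sign (a := fun i k => A i j k)) => [i|i|k].
  - by rewrite !mxE.
  - by have [] := alt_A i j.
  - by have [] := alt_A j k.
have rows_P i : sort_desc (row i (Lmx P)) = sort_desc (z_vec n).
  apply: (sort_desc_of_perm_slice (p := P i)) => [j|j|k].
  - by rewrite !mxE.
  - by have [] := one_P i j.
  - by have [] := one_P i k.
have cols_P j : sort_desc (col j (Lmx P))^T = sort_desc (z_vec n).
  apply: (sort_desc_of_perm_slice (p := fun i k => P i j k)) => [i|i|k].
  - by rewrite !mxE.
  - by have [] := one_P i j.
  - by have [] := one_P j k.
split=> //; split=> [i|j]; rewrite /majorized ?rows_P ?cols_P.
  exact: rows_A.
exact: cols_A.
Qed.
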